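(* Let \(X\) be a nonempty set and let \(\Phi\) be a mapping with domain \(X^{2}\) such that \(|\Phi(X^{2})| \leqslant \aleph_{0}\). Then the following conditions are equivalent. (i) \(\Phi\) is combinatorially similar to an ultrametric \(d \colon X^{2} \to [0,\infty)\) satisfying \(d(X^{2}) \subseteq \mathbb{Q}^{+}\), where \(\mathbb{Q}^{+} = \mathbb{Q} \cap [0,\infty)\). (ii) \(\Phi\) is combinatorially similar to an ultrametric. (iii) \(\Phi\) is symmetric, the transitive closure \(u_{\Phi}^{t}\) of the binary relation \(u_{\Phi}\) is antisymmetric, the equality \(\Phi^{-1}(a_0) = \Delta_{X}\) holds for some \(a_0 \in \Phi(X^{2})\), where \(\Delta_X=\{\langle x,x\rangle: x\in X\}\), and for every triple \(\langle x_1, x_2, x_3\rangle\) of points of \(X\) there is a permutation \((i_1,i_2,i_3)\) of \((1,2,3)\) such that \(\Phi(x_{i_1}, x_{i_2}) = \Phi(x_{i_2}, x_{i_3})\).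
   Context: For a mapping \(F\) with domain \(A\), \(F(A)\) denotes its range. An ultrametric on a set \(Z\) is a symmetric function \(d\colon Z^2\to[0,\infty)\) with \(d(x,y)=0\) iff \(x=y\), and \(d(x,y)\le \max\{d(x,z),d(z,y)\}\) for all \(x,y,z\in Z\). For nonempty sets \(X,Y\) and mappings \(\Phi\) with domain \(X^2\), \(\Psi\) with domain \(Y^2\), \(\Phi\) is combinatorially similar to \(\Psi\) if there are bijections \(f\colon \Phi(X^2)\to\Psi(Y^2)\) and \(g\colon Y\to X\) with \(\Psi(x,y)=f(\Phi(g(x),g(y)))\) for all \(x,y\in Y\). For \(\Phi\) with domain \(X^2\) and \(Y=\Phi(X^2)\), \(u_\Phi\subseteq Y^2\) is the relation: \(\langle y_1,y_2\rangle\in u_\Phi\) iff there are \(x_1,x_2,x_3\in X\) with \(y_1=\Phi(x_1,x_3)\) and \(y_2=\Phi(x_1,x_2)=\Phi(x_2,x_3)\). The transitive closure of a relation \(\gamma\) is \(\gamma^t=\bigcup_{n\ge1}\gamma^n\), where \(\gamma^1=\gamma\), \(\gamma^{n+1}=\gamma^n\circ\gamma\) and \(\langle x,y\rangle\in\alpha\circ\beta\) iff there is \(z\) with \(\langle x,z\rangle\in\alpha\), \(\langle z,y\rangle\in\beta\). *)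

From Stdlib Require Import Reals QArith Qreals.
From mathcomp Require Import all_boot all_fingroup.

Set Implicit Arguments.
Unset Strict Implicit.

Definition in_range {X A : Type} (Phi : X -> X -> A) (a : A) : Prop :=
  exists x y, Phi x y = a.

Definition countable_range {X A : Type} (Phi : X -> X -> A) : Prop :=
  exists h : A -> nat, forall a b, in_range Phi a -> in_range Phi b -> h a = h b -> a = b.

Definition ultrametric {Z : Type} (d : Z -> Z -> R) : Prop :=
  (forall x y, Rle R0 (d x y)) /\
  (forall x y, d x y = d y x) /\
  (forall x y, d x y = R0 <-> x = y) /\
  (forall x y z, Rle (d x y) (Rmax (d x z) (d z y))).

Definition bij_between_ranges {X Y A B : Type}
  (Phi : X -> X -> A) (Psi : Y -> Y -> B) (f : A -> B) : Prop :=
  (forall a, in_range Phi a -> in_range Psi (f a)) /\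
  (forall a a', in_range Phi a -> in_range Phi a' -> f a = f a' -> a = a') /\
  (forall b, in_range Psi b -> exists a, in_range Phi a /\ f a = b).

Definition comb_similar {X Y A B : Type}
  (Phi : X -> X -> A) (Psi : Y -> Y -> B) : Prop :=
  exists (f : A -> B) (g : Y -> X),
    bij_between_ranges Phi Psi f /\ bijective g /\
    forall x y, Psi x y = f (Phi (g x) (g y)).

Definition u_rel {X A : Type} (Phi : X -> X -> A) (y1 y2 : A) : Prop :=
  exists x1 x2 x3, y1 = Phi x1 x3 /\ y2 = Phi x1 x2 /\ y2 = Phi x2 x3.

Fixpoint rel_pow {A : Type} (g : A -> A -> Prop) (n : nat) : A -> A -> Prop :=
  match n with
  | O => g
  | S k => fun x y => exists z, rel_pow g k x z /\ g z y
  end.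
(* rel_pow g n = gamma^(n+1); transitive closure = union over all n. *)
Definition tclosure {A : Type} (g : A -> A -> Prop) (x y : A) : Prop :=
  exists n, rel_pow g n x y.

Definition antisymmetric_rel {A : Type} (r : A -> A -> Prop) : Prop :=
  forall a b, r a b -> r b a -> a = b.

Definition nonneg_rational (r : R) : Prop :=
  exists q : Q, Qle (0#1) q /\ Q2R q = r.

Definition triple_of {X : Type} (x1 x2 x3 : X) (i : 'I_3) : X :=
  nth x1 [:: x1; x2; x3] i.

From Stdlib Require Import Reals QArith Qreals.
From mathcomp Require Import all_boot all_fingroup.
From Stdlib Require Import Lra Lqa Classical ClassicalEpsilon.

(* (ii) -> (iii): pulling an ultrametric back along the similarity, the ultrametric
   inequality says that the distance is monotone along u_Phi, which forces the
   antisymmetry of its transitive closure, and every ultrametric triangle is isosceles.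
   (iii) -> (i): the transitive closure of u_Phi, minus the diagonal, is a strict
   order on the countable range of Phi; it embeds injectively into (Q, <) by a greedy
   enumeration, since Q is dense and has no endpoints.  Shifting so that the diagonal
   value a0 is sent to 0 gives the ultrametric: by (iii) every triangle has two equal
   sides Phi a b = Phi b c and a third one Phi a c related to them by u_Phi, hence no
   longer than them. *)

Set Implicit Arguments.
Unset Strict Implicit.

Local Open Scope nat_scope.

Lemma finite_argmax (P : nat -> Prop) (v : nat -> Q) (n : nat) :
  (forall i, i < n -> ~ P i) \/
  exists i0, [/\ i0 < n, P i0 & forall i, i < n -> P i -> (v i <= v i0)%Q].
Proof.
elim: n => [|n [none|[i0 [lt_i0 P_i0 max_i0]]]]; first by left.
- case: (classic (P n)) => [P_n|not_Pn]; last first.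
    by left=> i; rewrite ltnS leq_eqVlt => /orP[/eqP->|/none].
  right; exists n; split=> // i; rewrite ltnS leq_eqVlt => /orP[/eqP->|/none//].
  by move=> _; apply: Qle_refl.
- right; case: (classic (P n /\ (v i0 <= v n)%Q)) => [[P_n le_i0n]|not_new_max].
  + exists n; split=> // i; rewrite ltnS leq_eqVlt => /orP[/eqP->|lt_i P_i].
      by move=> _; apply: Qle_refl.
    exact: Qle_trans (max_i0 i lt_i P_i) le_i0n.
  + exists i0; split=> [|//|i]; first exact: ltnW.
    rewrite ltnS leq_eqVlt => /orP[/eqP-> P_n|lt_i]; last exact: max_i0.
    by apply: Qlt_le_weak; apply: Qnot_le_lt => le_i0n; apply: not_new_max.
Qed.

Lemma Q_interpolate_avoiding (n : nat) (v : nat -> Q) (lo up : nat -> Prop) :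
  (forall i j, i < n -> j < n -> lo i -> up j -> (v i < v j)%Q) ->
  exists r : Q, [/\ forall i, i < n -> lo i -> (v i < r)%Q,
                    forall j, j < n -> up j -> (r < v j)%Q &
                    forall j, j < n -> ~ (r == v j)%Q].
Proof.
move=> lo_lt_up.
have [a [lo_le_a a_lt_up]] : exists a, (forall i, i < n -> lo i -> (v i <= a)%Q) /\
                                       (forall j, j < n -> up j -> (a < v j)%Q).
  case: (finite_argmax lo v n) => [no_lo|[i0 [lt_i0 lo_i0 max_i0]]]; last first.
    by exists (v i0); split=> // j lt_j up_j; apply: lo_lt_up.
  case: (finite_argmax (fun _ => True) (fun i => - v i)%Q n) => [empty|[i0 [_ _ min_i0]]].
    by exists 0%Q; split=> i lt_i; [move/(no_lo i lt_i) | case: (empty i lt_i)].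
  exists (v i0 - 1)%Q; split=> [i lt_i /(no_lo i lt_i)//|j lt_j _].
  by have := min_i0 j lt_j I; Lqa.lra.
have [b [a_lt_b gap]] : exists b, (a < b)%Q /\ forall j, j < n -> (a < v j)%Q -> (b <= v j)%Q.
  case: (finite_argmax (fun j => a < v j)%Q (fun j => - v j)%Q n)
    => [none|[j0 [_ above_j0 min_j0]]].
    by exists (a + 1)%Q; split=> [|j lt_j /(none j lt_j)//]; Lqa.lra.
  by exists (v j0); split=> // j lt_j /(min_j0 j lt_j); Lqa.lra.
exists ((a + b) * (1 # 2))%Q; split.
- by move=> i lt_i /(lo_le_a i lt_i); Lqa.lra.
- by move=> j lt_j /(a_lt_up j lt_j) /(gap j lt_j); Lqa.lra.
- by move=> j lt_j; case: (Qlt_le_dec a (v j)) => [/(gap j lt_j)|]; Lqa.lra.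
Qed.

Section GreedyEmbedding.

Variable R : nat -> nat -> Prop.
Hypothesis R_trans : forall i j k, R i j -> R j k -> R i k.
Hypothesis R_irrefl : forall i, ~ R i i.

Definition admissible_value (n : nat) (v : nat -> Q) (r : Q) : Prop :=
  [/\ forall m, m < n -> R m n -> (v m < r)%Q,
      forall m, m < n -> R n m -> (r < v m)%Q &
      forall m, m < n -> ~ (r == v m)%Q].

(* [greedy_prefix n m] is the value chosen for [m < n] after [n] steps; step [k] picks
   any admissible value, which exists by [Q_interpolate_avoiding]. *)
Fixpoint greedy_prefix (n : nat) : nat -> Q :=
  if n is k.+1 then
    fun m => if m == k then epsilon (inhabits 0%Q) (admissible_value k (greedy_prefix k))
             else greedy_prefix k m
  else fun _ => 0%Q.

Definition greedy_embedding (n : nat) : Q := greedy_prefix n.+1 n.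

Lemma greedy_prefixE n m : m < n -> greedy_prefix n m = greedy_embedding m.
Proof.
elim: n => [|n IH] //; rewrite ltnS leq_eqVlt => /orP[/eqP-> //|lt_mn] /=.
by rewrite ltn_eqF //; apply: IH.
Qed.

Lemma admissible_value_ext n v w r :
  (forall m, m < n -> v m = w m) -> admissible_value n v r -> admissible_value n w r.
Proof.
move=> vw [below above avoid]; split=> m lt_m; rewrite -vw //.
- exact: below.
- exact: above.
- exact: avoid.
Qed.

Lemma greedy_embedding_lt_below N :
  (forall k, k < N -> admissible_value k greedy_embedding (greedy_embedding k)) ->
  forall i j, i < N -> j < N -> R i j -> (greedy_embedding i < greedy_embedding j)%Q.
Proof.
move=> adm i j lt_i lt_j Rij; case: (ltngtP i j) => [lt_ij|lt_ji|eq_ij].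
- by have [below _ _] := adm j lt_j; apply: below.
- by have [_ above _] := adm i lt_i; apply: above.
- by rewrite eq_ij in Rij; case: (R_irrefl Rij).
Qed.

Lemma greedy_embedding_admissible n :
  admissible_value n greedy_embedding (greedy_embedding n).
Proof.
elim/ltn_ind: n => n IH.
apply: (admissible_value_ext (greedy_prefixE (n := n))).
rewrite /greedy_embedding /= eqxx; apply: epsilon_spec.
have lo_lt_up i j : i < n -> j < n -> R i n -> R n j ->
    (greedy_prefix n i < greedy_prefix n j)%Q.
  move=> lt_i lt_j Rin Rnj; rewrite !greedy_prefixE //.
  exact: greedy_embedding_lt_below IH i j lt_i lt_j (R_trans Rin Rnj).
by have [r [below above avoid]] := Q_interpolate_avoiding lo_lt_up; exists r; split.
Qed.

Lemma nat_order_embedding :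
  exists q : nat -> Q, (forall i j, R i j -> (q i < q j)%Q) /\
                       (forall i j, i <> j -> ~ (q i == q j)%Q).
Proof.
exists greedy_embedding; split=> i j.
- apply: (greedy_embedding_lt_below (N := (maxn i j).+1)) => [k _||];
    by [apply: greedy_embedding_admissible | rewrite ltnS (leq_maxl, leq_maxr)].
- move=> neq_ij; case: (ltngtP i j) => [lt_ij|lt_ji|//].
  + have [_ _ avoid] := greedy_embedding_admissible j.
    by move=> eq_q; apply: (avoid i lt_ij); apply: Qeq_sym.
  + by have [_ _ avoid] := greedy_embedding_admissible i; apply: avoid.
Qed.

End GreedyEmbedding.

Lemma countable_order_embedding (A : Type) (S : A -> Prop) (lt : A -> A -> Prop)
    (h : A -> nat) :
  (forall a b, S a -> S b -> h a = h b -> a = b) ->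
  (forall a b c, S a -> S b -> S c -> lt a b -> lt b c -> lt a c) ->
  (forall a, ~ lt a a) ->
  exists q : A -> Q, (forall a b, S a -> S b -> lt a b -> (q a < q b)%Q) /\
                     (forall a b, S a -> S b -> a <> b -> ~ (q a == q b)%Q).
Proof.
move=> h_inj lt_trans lt_irrefl.
pose R n m := exists a b, [/\ S a, S b, h a = n, h b = m & lt a b].
have R_trans i j k : R i j -> R j k -> R i k.
  move=> [a [b [Sa Sb <- <- lt_ab]]] [b' [c [Sb' Sc eq_h <- lt_bc]]].
  rewrite (h_inj _ _ Sb' Sb eq_h) in lt_bc.
  by exists a, c; split=> //; apply: lt_trans lt_ab lt_bc.
have R_irrefl i : ~ R i i.
  move=> [a [b [Sa Sb <- eq_h lt_ab]]].
  by rewrite (h_inj _ _ Sb Sa eq_h) in lt_ab; apply: lt_irrefl lt_ab.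
have [q [q_lt q_neq]] := nat_order_embedding R_trans R_irrefl.
exists (fun a => q (h a)); split=> a b Sa Sb.
- by move=> lt_ab; apply: q_lt; exists a, b.
- by move=> neq_ab; apply: q_neq => /(h_inj _ _ Sa Sb).
Qed.

Section TransitiveClosure.

Variables (A : Type) (g : A -> A -> Prop).

Lemma tclosure_step a b : g a b -> tclosure g a b.
Proof. by exists 0. Qed.

Lemma rel_pow_cat m n a b c :
  rel_pow g n a b -> rel_pow g m b c -> rel_pow g (m + n).+1 a c.
Proof.
elim: m c => [|m IH] c ab /=; first by exists b.
by move=> [d [bd dc]]; exists d; split=> //; apply: IH.
Qed.

Lemma tclosure_trans a b c : tclosure g a b -> tclosure g b c -> tclosure g a c.
Proof. by move=> [n ab] [m bc]; exists (m + n).+1; apply: rel_pow_cat ab bc. Qed.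

Lemma tclosure_ind (P : A -> A -> Prop) :
  (forall a b, g a b -> P a b) -> (forall a b c, P a b -> P b c -> P a c) ->
  forall a b, tclosure g a b -> P a b.
Proof.
move=> gP P_trans a b [n]; elim: n b => [|n IH] b /=; first exact: gP.
by move=> [c [ac cb]]; apply: P_trans (IH c ac) (gP c b cb).
Qed.

End TransitiveClosure.

Definition in_some_order (X : Type) (P : X -> X -> X -> Prop) (x1 x2 x3 : X) : Prop :=
  exists s : 'S_3, P (triple_of x1 x2 x3 (s ord0)) (triple_of x1 x2 x3 (s (inord 1)))
                    (triple_of x1 x2 x3 (s (inord 2))).

Lemma inord3_1 : (inord 1 : 'I_3) = Ordinal (isT : 1 < 3).
Proof. by apply: val_inj; rewrite /= inordK. Qed.

Lemma inord3_2 : (inord 2 : 'I_3) = Ordinal (isT : 2 < 3).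
Proof. by apply: val_inj; rewrite /= inordK. Qed.

Lemma in_some_orderP (X : Type) (P : X -> X -> X -> Prop) (x1 x2 x3 : X) :
  in_some_order P x1 x2 x3 <->
  P x1 x2 x3 \/ P x1 x3 x2 \/ P x2 x1 x3 \/ P x2 x3 x1 \/ P x3 x1 x2 \/ P x3 x2 x1.
Proof.
rewrite /in_some_order inord3_1 inord3_2; split.
- case=> s; have sD i j : i != j -> s i != s j by rewrite (inj_eq perm_inj).
  move: (sD ord0 (Ordinal (isT : 1 < 3)) isT) (sD ord0 (Ordinal (isT : 2 < 3)) isT).
  move: (sD (Ordinal (isT : 1 < 3)) (Ordinal (isT : 2 < 3)) isT).
  move: (s _) (s _) (s _).
  by do 3![case=> [[|[|[|?]]] ?] //] => _ _ _ /=; tauto.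
- set t01 := tperm ord0 (Ordinal (isT : 1 < 3)).
  set t12 := tperm (Ordinal (isT : 1 < 3)) (Ordinal (isT : 2 < 3)).
  case=> [|[|[|[|[|]]]]] HP.
  + by exists 1%g; rewrite !perm1.
  + by exists t12; rewrite !permE.
  + by exists t01; rewrite !permE.
  + by exists (t12 * t01)%g; rewrite !permM !permE.
  + by exists (t01 * t12)%g; rewrite !permM !permE.
  + by exists (tperm ord0 (Ordinal (isT : 2 < 3))); rewrite !permE.
Qed.

Lemma in_some_order_impl (X : Type) (P P' : X -> X -> X -> Prop) (x1 x2 x3 : X) :
  (forall a b c, P a b c -> P' a b c) -> in_some_order P x1 x2 x3 -> in_some_order P' x1 x2 x3.
Proof. by move=> PP' [s Ps]; exists s; apply: PP'. Qed.

Section UltrametricTriangles.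

Local Open Scope R_scope.

Lemma ultrametric_isosceles (Z : Type) (d : Z -> Z -> R) :
  ultrametric d -> forall x1 x2 x3, in_some_order (fun a b c => d a b = d b c) x1 x2 x3.
Proof.
move=> [_ [d_sym [_ d_ultra]]] x1 x2 x3; apply/in_some_orderP.
have := d_ultra x1 x2 x3; have := d_ultra x1 x3 x2; have := d_ultra x2 x3 x1.
have := d_sym x1 x2; have := d_sym x1 x3; have := d_sym x2 x3.
rewrite /Rmax; repeat case: Rle_dec; Lra.lra.
Qed.

Lemma ultrametric_of_isosceles (Z : Type) (d : Z -> Z -> R) :
  (forall x y, 0 <= d x y) -> (forall x y, d x y = d y x) ->
  (forall x y, d x y = 0 <-> x = y) ->
  (forall x1 x2 x3, in_some_order (fun a b c => d a b = d b c /\ d a c <= d a b) x1 x2 x3) ->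
  ultrametric d.
Proof.
move=> d_ge0 d_sym d_eq0 d_iso; split; [done|split; [done|split; [done|]]].
move=> x y z; have := d_iso x y z; rewrite in_some_orderP.
have := d_sym x y; have := d_sym x z; have := d_sym y z.
rewrite /Rmax; case: Rle_dec; Lra.lra.
Qed.

End UltrametricTriangles.

Definition injective_on_range (X A B : Type) (Phi : X -> X -> A) (f : A -> B) : Prop :=
  forall a a', in_range Phi a -> in_range Phi a' -> f a = f a' -> a = a'.

Lemma in_range_value (X A : Type) (Phi : X -> X -> A) x y : in_range Phi (Phi x y).
Proof. by exists x, y. Qed.

Lemma comb_similar_of_injective_on_range (X A B : Type) (Phi : X -> X -> A) (f : A -> B) :
  injective_on_range Phi f -> comb_similar Phi (fun x y => f (Phi x y)).
Proof.
move=> f_inj; exists f, id; split; [|split; [by exists id|by []]].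
split; [|split; [exact: f_inj|]].
- by move=> _ [x [y <-]]; exists x, y.
- by move=> _ [x [y <-]]; exists (Phi x y); split; first exact: in_range_value.
Qed.

Lemma comb_similar_representation (X Y A B : Type) (Phi : X -> X -> A) (Psi : Y -> Y -> B) :
  comb_similar Phi Psi ->
  exists (f : A -> B) (g : X -> Y),
    [/\ injective_on_range Phi f, injective g & forall x y, f (Phi x y) = Psi (g x) (g y)].
Proof.
move=> [f [g [[_ [f_inj _]] [[g' gK g'K] Psi_f]]]].
exists f, g'; split=> // [|x y]; first exact: can_inj g'K.
by rewrite Psi_f !g'K.
Qed.

Lemma ultrametric_comp (X Z : Type) (d : Z -> Z -> R) (g : X -> Z) :
  injective g -> ultrametric d -> ultrametric (fun x y => d (g x) (g y)).
Proof.
move=> g_inj [d_ge0 [d_sym [d_eq0 d_ultra]]]; split=> [//|]; split=> [//|].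
split=> [x y|x y z]; last exact: d_ultra.
by rewrite d_eq0; split=> [/g_inj|->].
Qed.

Lemma u_rel_in_range (X A : Type) (Phi : X -> X -> A) a b :
  u_rel Phi a b -> in_range Phi a /\ in_range Phi b.
Proof. by move=> [x1 [x2 [x3 [-> [-> _]]]]]; split; apply: in_range_value. Qed.

Lemma tclosure_u_rel_in_range (X A : Type) (Phi : X -> X -> A) a b :
  tclosure (u_rel Phi) a b -> in_range Phi a /\ in_range Phi b.
Proof.
apply: (tclosure_ind (P := fun a b => in_range Phi a /\ in_range Phi b)).
- exact: u_rel_in_range.
- by move=> a' b' c' [ra _] [_ rc].
Qed.

Definition diagonal_fiber (X A : Type) (Phi : X -> X -> A) : Prop :=
  exists a0, in_range Phi a0 /\ forall x y, Phi x y = a0 <-> x = y.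

Definition isosceles_triples (X A : Type) (Phi : X -> X -> A) : Prop :=
  forall x1 x2 x3, in_some_order (fun a b c => Phi a b = Phi b c) x1 x2 x3.

Definition ultrametric_like (X A : Type) (Phi : X -> X -> A) : Prop :=
  (forall x y, Phi x y = Phi y x) /\ antisymmetric_rel (tclosure (u_rel Phi)) /\
  diagonal_fiber Phi /\ isosceles_triples Phi.

Section UltrametricRepresentation.

Local Open Scope R_scope.

Variables (X A : Type) (Phi : X -> X -> A) (f : A -> R) (e : X -> X -> R).
Hypothesis f_inj : injective_on_range Phi f.
Hypothesis f_Phi : forall x y, f (Phi x y) = e x y.
Hypothesis e_ultra : ultrametric e.

Lemma Phi_eq_iff x y x' y' : Phi x y = Phi x' y' <-> e x y = e x' y'.
Proof.
rewrite -!f_Phi; split=> [->//|]; apply: f_inj; apply: in_range_value.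
Qed.

Lemma f_monotone_u_rel a b : u_rel Phi a b -> f a <= f b.
Proof.
move=> [x1 [x2 [x3 [-> [-> eq_b]]]]]; rewrite !f_Phi.
have [_ [_ [_ e_ultra3]]] := e_ultra; move: (e_ultra3 x1 x3 x2).
by move/Phi_eq_iff: eq_b => <-; rewrite Rmax_left //; apply: Rle_refl.
Qed.

Lemma f_monotone_tclosure a b : tclosure (u_rel Phi) a b -> f a <= f b.
Proof.
apply: (tclosure_ind (P := fun a b => f a <= f b)) => [|a' b' c'];
  [exact: f_monotone_u_rel|exact: Rle_trans].
Qed.

Lemma ultrametric_like_of_representation : inhabited X -> ultrametric_like Phi.
Proof.
case=> x0; have [_ [e_sym [e_eq0 _]]] := e_ultra.
split; [|split; [|split]].
- by move=> x y; apply/Phi_eq_iff; apply: e_sym.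
- move=> a b ab ba; have [ra rb] := tclosure_u_rel_in_range ab.
  by apply: f_inj ra rb _; apply: Rle_antisym; apply: f_monotone_tclosure.
- exists (Phi x0 x0); split=> [|x y]; first exact: in_range_value.
  by rewrite Phi_eq_iff (proj2 (e_eq0 x0 x0) erefl) e_eq0.
- move=> x1 x2 x3; apply: in_some_order_impl (ultrametric_isosceles e_ultra x1 x2 x3).
  by move=> a b c /Phi_eq_iff.
Qed.

End UltrametricRepresentation.

Lemma u_rel_rank (X A : Type) (Phi : X -> X -> A) :
  countable_range Phi -> antisymmetric_rel (tclosure (u_rel Phi)) ->
  exists q : A -> Q, (forall a b, u_rel Phi a b -> (q a <= q b)%Q) /\
    (forall a b, in_range Phi a -> in_range Phi b -> a <> b -> ~ (q a == q b)%Q).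
Proof.
move=> [h h_inj] Phi_antisym.
pose lt a b := tclosure (u_rel Phi) a b /\ a <> b.
have lt_trans a b c : in_range Phi a -> in_range Phi b -> in_range Phi c ->
    lt a b -> lt b c -> lt a c.
  move=> _ _ _ [ab neq_ab] [bc neq_bc]; split; first exact: tclosure_trans ab bc.
  by move=> eq_ac; rewrite -eq_ac in bc; apply: neq_ab; apply: Phi_antisym.
have lt_irrefl a : ~ lt a a by case=> _; apply.
have [q [q_lt q_neq]] := countable_order_embedding h_inj lt_trans lt_irrefl.
exists q; split=> // a b ab; case: (classic (a = b)) => [->|neq_ab]; first exact: Qle_refl.
have [ra rb] := u_rel_in_range ab.
by apply: Qlt_le_weak; apply: q_lt => //; split=> //; apply: tclosure_step.
Qed.

Section RationalUltrametric.

Local Open Scope R_scope.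

Lemma rational_ultrametric_of_ultrametric_like (X A : Type) (Phi : X -> X -> A) :
  countable_range Phi -> ultrametric_like Phi ->
  exists d : X -> X -> R, ultrametric d /\
    (forall x y, nonneg_rational (d x y)) /\ comb_similar Phi d.
Proof.
move=> Phi_countable [Phi_sym [Phi_antisym [[a0 [a0_range Phi_a0]] Phi_iso]]].
have [q [q_u_rel q_neq]] := u_rel_rank Phi_countable Phi_antisym.
have q_a0 x y : (q a0 <= q (Phi x y))%Q.
  by apply: q_u_rel; exists x, y, x; split; [symmetry; apply/Phi_a0 | split].
pose f a := Q2R (q a - q a0).
have f_inj : injective_on_range Phi f.
  move=> a b ra rb /eqR_Qeq eq_f; apply: NNPP => neq_ab.
  by apply: (q_neq a b ra rb neq_ab); Lqa.lra.
have f_a0 : f a0 = 0 by rewrite /f Q2R_minus; Lra.lra.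
exists (fun x y => f (Phi x y)); split; [|split].
- apply: ultrametric_of_isosceles => [x y|x y|x y|x1 x2 x3].
  + by rewrite -f_a0; apply: Qle_Rle; have := q_a0 x y; Lqa.lra.
  + by rewrite Phi_sym.
  + rewrite -f_a0; split=> [/(f_inj _ _ (in_range_value Phi x y) a0_range)/Phi_a0 //|<-].
    by rewrite (proj2 (Phi_a0 x x) erefl).
  + apply: in_some_order_impl (Phi_iso x1 x2 x3) => a b c eq_ab_bc.
    split; first by rewrite eq_ab_bc.
    apply: Qle_Rle; have : u_rel Phi (Phi a c) (Phi a b) by exists a, b, c.
    by move/q_u_rel; Lqa.lra.
- by move=> x y; exists (q (Phi x y) - q a0)%Q; split=> //; have := q_a0 x y; Lqa.lra.
- exact: comb_similar_of_injective_on_range.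
Qed.

End RationalUltrametric.

Theorem corollary3p11 (X A : Type) (Phi : X -> X -> A)
  (hX : inhabited X) (hcount : countable_range Phi) :
  let cond_i :=
    exists d : X -> X -> R, ultrametric d /\
      (forall x y, nonneg_rational (d x y)) /\ comb_similar Phi d in
  let cond_ii :=
    exists (Z : Type) (d : Z -> Z -> R), ultrametric d /\ comb_similar Phi d in
  let cond_iii :=
    (forall x y, Phi x y = Phi y x) /\
    antisymmetric_rel (tclosure (u_rel Phi)) /\
    (exists a0, in_range Phi a0 /\ forall x y, Phi x y = a0 <-> x = y) /\
    (forall x1 x2 x3 : X, exists s : 'S_3,
       Phi (triple_of x1 x2 x3 (s ord0)) (triple_of x1 x2 x3 (s (inord 1))) =
       Phi (triple_of x1 x2 x3 (s (inord 1))) (triple_of x1 x2 x3 (s (inord 2)))) in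
  (cond_i <-> cond_ii) /\ (cond_ii <-> cond_iii).
Proof.
move=> cond_i cond_ii cond_iii.
have i_ii : cond_i -> cond_ii by move=> [d [d_ultra [_ d_sim]]]; exists X, d.
have ii_iii : cond_ii -> cond_iii.
  move=> [Z [d [d_ultra /comb_similar_representation [f [g [f_inj g_inj f_Phi]]]]]].
  exact: ultrametric_like_of_representation f_inj f_Phi (ultrametric_comp g_inj d_ultra) hX.
have iii_i : cond_iii -> cond_i := rational_ultrametric_of_ultrametric_like hcount.
tauto.
Qed.
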